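(* Let $\alpha\in(0,1)$ and $\eta>0$, and run the generalized share algorithm with the projection mixing rule $\hat p_{t+1}\in\arg\min_{x\in\Delta_d^\alpha}\mathcal K(x,v_{t+1})$. Then for all $T\ge1$, all loss vectors $\ell_1,\dots,\ell_T\in[0,1]^d$, and all $u_1,\dots,u_T\in\mathbb R_+^d$, \[ \sum_{t=1}^T\|u_t\|_1\,\hat p_t^\top\ell_t-\sum_{t=1}^T u_t^\top\ell_t\le \frac{\|u_1\|_1\ln d}{\eta}+\frac{m(u_1^T)}{\eta}\ln\frac{d}{\alpha}+\Big(\frac{\eta}{8}+\alpha\Big)\sum_{t=1}^T\|u_t\|_1 . \]
   Context: Let $d\ge1$ and $\Delta_d=\{q\in[0,1]^d:\sum_{i=1}^d q_i=1\}$. The generalized share algorithm with learning rate $\eta>0$ and mixing functions $\psi_t:[0,1]^{td}\to\Delta_d$ ($t\ge2$) works as follows: $\hat p_1=v_1=(1/d,\dots,1/d)$. At each round $t=1,2,\dots$ it predicts $\hat p_t=(\hat p_{1,t},\dots,\hat p_{d,t})\in\Delta_d$, observes a loss vector $\ell_t=(\ell_{1,t},\dots,\ell_{d,t})\in[0,1]^d$ (arbitrary), and suffers loss $\hat p_t^\top\ell_t$. It then forms the pre-weights $v_{j,t+1}=\hat p_{j,t}e^{-\eta\ell_{j,t}}/\sum_{i=1}^d\hat p_{i,t}e^{-\eta\ell_{i,t}}$ for $j=1,\dots,d$, sets $v_{t+1}=(v_{1,t+1},\dots,v_{d,t+1})$, and defines $\hat p_{t+1}=\psi_{t+1}(V_{t+1})$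 where $V_{t+1}=[v_{i,s}]_{1\le i\le d,1\le s\le t+1}$ is the $d\times(t+1)$ matrix of all pre-weights so far. Here $\Delta_d^\alpha=[\alpha/d,1]^d\cap\Delta_d$ and $\mathcal K(x,v)=\sum_{i=1}^d x_i\ln(x_i/v_i)$ is the Kullback–Leibler divergence. For $x,y\in\mathbb R_+^d$, $D_{\mathrm{TV}}(x,y)=\sum_{i:\,x_i\ge y_i}(x_i-y_i)$, and for $u_1,\dots,u_T\in\mathbb R_+^d$, $m(u_1^T)=\sum_{t=2}^T D_{\mathrm{TV}}(u_t,u_{t-1})$. *)

From Stdlib Require Import Reals.
Open Scope R_scope.

(* Vectors in R^d are functions nat -> R; only indices 0..d-1 matter. *)
Fixpoint rsum (n : nat) (f : nat -> R) : R :=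
  match n with
  | O => 0
  | S k => rsum k f + f k
  end.

Definition simplex (d : nat) (x : nat -> R) : Prop :=
  (forall i, (i < d)%nat -> 0 <= x i <= 1) /\ rsum d x = 1.

Definition simplex_alpha (d : nat) (alpha : R) (x : nat -> R) : Prop :=
  simplex d x /\ (forall i, (i < d)%nat -> alpha / INR d <= x i /\ x i <= 1).

Definition KL (d : nat) (x v : nat -> R) : R :=
  rsum d (fun i => x i * ln (x i / v i)).

Definition dot (d : nat) (x y : nat -> R) : R := rsum d (fun i => x i * y i).

Definition norm1 (d : nat) (x : nat -> R) : R := rsum d (fun i => Rabs (x i)).

Definition preweight (d : nat) (eta : R) (p l : nat -> R) : nat -> R :=
  fun j => p j * exp (- eta * l j) / rsum d (fun i => p i * exp (- eta * l i)).

Definition is_KL_projection (d : nat) (alpha : R) (v x : nat -> R) : Prop :=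
  simplex_alpha d alpha x /\
  forall y, simplex_alpha d alpha y -> KL d x v <= KL d y v.

Definition DTV (d : nat) (x y : nat -> R) : R :=
  rsum d (fun i => if Rle_dec (y i) (x i) then x i - y i else 0).

(* m(u_1^T) = sum_{t=2}^T D_TV(u_t, u_{t-1}); u indexed by t >= 1 *)
Definition shifts (d T : nat) (u : nat -> nat -> R) : R :=
  rsum (T - 1) (fun k => DTV d (u (k + 2)%nat) (u (k + 1)%nat)).

Definition sumT (T : nat) (f : nat -> R) : R := rsum T (fun k => f (S k)).

From Stdlib Require Import Reals Lra Lia.
From Coquelicot Require Import Coquelicot.
Open Scope R_scope.

(** The comparator u_t is replaced by the mixed comparator
      w_t = (1 - α) u_t + α ‖u_t‖₁ / d · (1,…,1),
    whose normalization lies in Δ_d^α, and progress is measured by the cross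
    entropy CE(w, x) = Σ_i w_i (- ln x_i).  Writing v_{t+1} for the pre-weights:
    - one exponential-weights step (Hoeffding's lemma applied to the
      normalizer) gives ‖u_t‖ p_t·ℓ_t - u_t·ℓ_t
        ≤ (CE(w_t, p_t) - CE(w_t, v_{t+1})) / η + (η/8 + α) ‖u_t‖;
    - the projection does not increase CE(w_t, ·), by the variational
      inequality of the KL projection onto the convex set Δ_d^α;
    - switching comparators costs at most ln(d/α) D_TV(u_{t+1}, u_t), because
      0 ≤ - ln x_i ≤ ln(d/α) on Δ_d^α and D_TV(w_{t+1}, w_t) ≤ D_TV(u_{t+1}, u_t);
    - CE(w_1, p_1) = ‖u_1‖ ln d and CE ≥ 0.
    Summing the per-round bounds, the cross entropies telescope. *)

Lemma rsum_ext n f g :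
  (forall i, (i < n)%nat -> f i = g i) -> rsum n f = rsum n g.
Proof.
  induction n as [|n IH]; intros H; simpl; [reflexivity|].
  rewrite IH by (intros; apply H; lia). rewrite H by lia. reflexivity.
Qed.

Lemma rsum_le n f g :
  (forall i, (i < n)%nat -> f i <= g i) -> rsum n f <= rsum n g.
Proof.
  induction n as [|n IH]; intros H; simpl; [lra|].
  pose proof (H n ltac:(lia)). pose proof (IH ltac:(intros; apply H; lia)). lra.
Qed.

Lemma rsum_plus n f g : rsum n (fun i => f i + g i) = rsum n f + rsum n g.
Proof. induction n as [|n IH]; simpl; [ring|]. rewrite IH; ring. Qed.

Lemma rsum_minus n f g : rsum n (fun i => f i - g i) = rsum n f - rsum n g.
Proof. induction n as [|n IH]; simpl; [ring|]. rewrite IH; ring. Qed.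

Lemma rsum_scal n c f : rsum n (fun i => c * f i) = c * rsum n f.
Proof. induction n as [|n IH]; simpl; [ring|]. rewrite IH; ring. Qed.

Lemma rsum_const n c : rsum n (fun _ => c) = INR n * c.
Proof. induction n as [|n IH]; cbn [rsum]; [simpl; ring|]. rewrite IH, S_INR; ring. Qed.

Lemma rsum_nonneg n f : (forall i, (i < n)%nat -> 0 <= f i) -> 0 <= rsum n f.
Proof. intros H. rewrite <- (Rmult_0_r (INR n)), <- rsum_const. apply rsum_le, H. Qed.

Lemma rsum_le_elem n f j :
  (forall i, (i < n)%nat -> 0 <= f i) -> (j < n)%nat -> f j <= rsum n f.
Proof.
  induction n as [|n IH]; simpl; intros H Hj; [lia|].
  assert (0 <= rsum n f) by (apply rsum_nonneg; intros; apply H; lia).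
  pose proof (H n ltac:(lia)).
  destruct (Nat.eq_dec j n) as [->|Hne]; [lra|].
  pose proof (IH ltac:(intros; apply H; lia) ltac:(lia)). lra.
Qed.

Lemma rsum_telescope (a b : nat -> R) n :
  rsum (S n) (fun k => a (S k) - b (S k))
  = a 1%nat - b (S n) + rsum n (fun k => a (S (S k)) - b (S k)).
Proof. induction n as [|n IH]; [simpl; ring|]. cbn [rsum] in *. rewrite IH. ring. Qed.

Lemma ln_le_sub1 y : 0 < y -> ln y <= y - 1.
Proof. intros Hy. pose proof (exp_ineq1_le (ln y)) as H. rewrite exp_ln in H; lra. Qed.

Lemma exp_le_exp x y : x <= y -> exp x <= exp y.
Proof. intros [Hlt|Heq]; [left; apply exp_increasing, Hlt|rewrite Heq; right; reflexivity]. Qed.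

(* Convexity of exp: on [0, 1], exp (a l) lies below the chord from 0 to a. *)
Lemma exp_chord l a : 0 <= l <= 1 -> exp (a * l) <= 1 - l + l * exp a.
Proof.
  intros Hl. set (s := a * l).
  pose proof (exp_ineq1_le (0 - s)) as Htan0. pose proof (exp_ineq1_le (a - s)) as Htana.
  assert (E0 : 1 = exp s * exp (0 - s)) by (rewrite <- exp_plus, <- exp_0; f_equal; ring).
  assert (Ea : exp a = exp s * exp (a - s)) by (rewrite <- exp_plus; f_equal; ring).
  pose proof (exp_pos s).
  assert (exp s * (1 + (0 - s)) <= 1) by (rewrite E0 at 2; apply Rmult_le_compat_l; lra).
  assert (exp s * (1 + (a - s)) <= exp a) by (rewrite Ea; apply Rmult_le_compat_l; lra).
  assert (exp s = (1 - l) * (exp s * (1 + (0 - s))) + l * (exp s * (1 + (a - s))))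
    by (unfold s; ring).
  nra.
Qed.

Lemma nondecreasing_of_derive_nonneg (f df : R -> R) :
  (forall x, is_derive f x (df x)) -> (forall x, 0 <= x -> 0 <= df x) ->
  forall a b, 0 <= a -> a <= b -> f a <= f b.
Proof.
  intros Hd Hpos a b Ha Hab.
  destruct (Req_dec a b) as [->|Hne]; [lra|].
  destruct (MVT_gen f a b df) as [c [Hc Heq]].
  - intros x _; apply Hd.
  - intros x _. apply derivable_continuous_pt. exists (df x). apply is_derive_Reals, Hd.
  - rewrite Rmin_left in Hc by lra. rewrite Rmax_right in Hc by lra.
    assert (0 <= df c * (b - a)) by (apply Rmult_le_pos; [apply Hpos|]; lra). lra.
Qed.

Section HoeffdingBernoulli.

Variable m : R.
Hypothesis Hm : 0 <= m <= 1.

(* mgf x = E[exp (- x X)] for X ~ Bernoulli(m). *)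
Let mgf x := 1 - m + m * exp (- x).
(* gap x = x²/8 - m x - ln (mgf x); Hoeffding's lemma says gap ≥ 0 on [0, +oo). *)
Let gap x := x * x / 8 - m * x - ln (mgf x).
Let gap' x := x / 4 - m + m * exp (- x) / mgf x.

Lemma mgf_pos x : 0 < mgf x.
Proof.
  unfold mgf. pose proof (exp_pos (- x)).
  destruct (Req_dec m 0) as [->|Hm0]; [lra|].
  assert (0 < m * exp (- x)) by (apply Rmult_lt_0_compat; lra). lra.
Qed.

Lemma gap_derive x : is_derive gap x (gap' x).
Proof. pose proof (mgf_pos x). unfold gap, gap', mgf in *. auto_derive; [lra|]. field. lra. Qed.

(* gap'' = 1/4 - q (1 - q) with q = m e^{-x} / mgf x, which is ≥ 0 by AM-GM. *)
Lemma gap'_derive x : is_derive gap' x (/ 4 - m * exp (- x) * (1 - m) / (mgf x * mgf x)).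
Proof. pose proof (mgf_pos x). unfold gap', mgf in *. auto_derive; [lra|]. field. lra. Qed.

Lemma gap'_nonneg x : 0 <= x -> 0 <= gap' x.
Proof.
  intros Hx. replace 0 with (gap' 0) at 1
    by (unfold gap', mgf; rewrite Ropp_0, exp_0; field; lra).
  apply (nondecreasing_of_derive_nonneg gap' _ gap'_derive); [|lra|lra].
  intros y _. pose proof (mgf_pos y). pose proof (exp_pos (- y)).
  assert (m * exp (- y) * (1 - m) / (mgf y * mgf y) <= / 4); [|lra].
  apply (Rmult_le_reg_r (mgf y * mgf y)); [nra|].
  unfold Rdiv; rewrite Rmult_assoc, Rinv_l, Rmult_1_r by nra.
  pose proof (pow2_ge_0 (m * exp (- y) - (1 - m))). unfold mgf. nra.
Qed.

Lemma hoeffding_bernoulli eta :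
  0 <= eta -> ln (1 - m + m * exp (- eta)) <= - eta * m + eta * eta / 8.
Proof.
  intros He.
  assert (0 <= gap eta); [|unfold gap, mgf in *; lra].
  replace 0 with (gap 0) at 1 by (unfold gap, mgf; rewrite Ropp_0, exp_0;
    replace (1 - m + m * 1) with 1 by ring; rewrite ln_1; lra).
  apply (nondecreasing_of_derive_nonneg gap _ gap_derive gap'_nonneg); lra.
Qed.

End HoeffdingBernoulli.

Lemma log_partition_bound d eta p l :
  0 <= eta -> (forall i, (i < d)%nat -> 0 <= p i) -> rsum d p = 1 ->
  (forall i, (i < d)%nat -> 0 <= l i <= 1) ->
  0 < rsum d (fun i => p i * exp (- eta * l i)) /\
  ln (rsum d (fun i => p i * exp (- eta * l i))) <= - eta * dot d p l + eta * eta / 8.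
Proof.
  intros He Hp Hs Hl.
  set (Z := rsum d (fun i => p i * exp (- eta * l i))).
  set (m := dot d p l).
  assert (Hm : 0 <= m <= 1).
  { split.
    - apply rsum_nonneg; intros i Hi. pose proof (Hp i Hi). pose proof (Hl i Hi). nra.
    - rewrite <- Hs. apply rsum_le; intros i Hi. pose proof (Hp i Hi). pose proof (Hl i Hi). nra. }
  assert (Hlow : exp (- eta) <= Z).
  { rewrite <- (Rmult_1_r (exp (- eta))), <- Hs, <- rsum_scal. apply rsum_le; intros i Hi.
    rewrite Rmult_comm. apply Rmult_le_compat_l; [apply Hp; auto|].
    destruct (Hl i Hi). apply exp_le_exp. nra. }
  (* each exp (- η ℓ_i) lies below the chord, so Z ≤ 1 - m + m e^{-η} *)
  assert (Hup : Z <= 1 - m + m * exp (- eta)).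
  { apply Rle_trans with (rsum d (fun i => p i - p i * l i + exp (- eta) * (p i * l i))).
    - apply rsum_le; intros i Hi. pose proof (exp_chord (l i) (- eta) (Hl i Hi)).
      pose proof (Hp i Hi).
      replace (p i - p i * l i + exp (- eta) * (p i * l i))
        with (p i * (1 - l i + l i * exp (- eta))) by ring.
      apply Rmult_le_compat_l; auto.
    - rewrite rsum_plus, rsum_minus, rsum_scal, Hs. unfold m, dot. lra. }
  pose proof (exp_pos (- eta)).
  split; [lra|].
  apply Rle_trans with (ln (1 - m + m * exp (- eta))); [apply ln_le; lra|].
  apply hoeffding_bernoulli; auto.
Qed.

Lemma preweight_distribution d eta p l :
  0 <= eta -> (forall i, (i < d)%nat -> 0 < p i) -> rsum d p = 1 ->
  (forall i, (i < d)%nat -> 0 <= l i <= 1) ->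
  (forall i, (i < d)%nat -> 0 < preweight d eta p l i <= 1) /\
  rsum d (preweight d eta p l) = 1.
Proof.
  intros He Hp Hs Hl.
  destruct (log_partition_bound d eta p l He ltac:(intros; left; auto) Hs Hl) as [HZ _].
  set (Z := rsum d (fun i => p i * exp (- eta * l i))) in *.
  assert (Hsum : rsum d (preweight d eta p l) = 1).
  { unfold preweight. fold Z.
    rewrite (rsum_ext _ _ (fun i => / Z * (p i * exp (- eta * l i))))
      by (intros; unfold Rdiv; ring).
    rewrite rsum_scal. fold Z. field. lra. }
  assert (Hpos : forall i, (i < d)%nat -> 0 < preweight d eta p l i).
  { intros i Hi. unfold preweight. fold Z. apply Rdiv_lt_0_compat; auto.
    apply Rmult_lt_0_compat; [auto|apply exp_pos]. }
  split; auto. intros i Hi. split; auto. rewrite <- Hsum.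
  apply rsum_le_elem; auto. intros; left; auto.
Qed.

Lemma simplex_alpha_pos d alpha x : (1 <= d)%nat -> 0 < alpha ->
  simplex_alpha d alpha x -> forall i, (i < d)%nat -> 0 < x i.
Proof.
  intros Hd Ha [_ Hb] i Hi. pose proof (Hb i Hi).
  assert (0 < alpha / INR d) by (apply Rdiv_lt_0_compat; [lra|apply lt_0_INR; lia]). lra.
Qed.

Lemma convex_comb_bounds a b s t eps :
  0 <= eps <= 1 -> a <= s <= b -> a <= t <= b -> a <= s + eps * (t - s) <= b.
Proof. intros; split; nra. Qed.

Lemma simplex_alpha_convex d alpha p x eps : 0 <= eps <= 1 ->
  simplex_alpha d alpha p -> simplex_alpha d alpha x ->
  simplex_alpha d alpha (fun i => p i + eps * (x i - p i)).
Proof.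
  intros He [[Hp01 Hsp] Hpa] [[Hx01 Hsx] Hxa]. split; [split|].
  - intros i Hi. apply convex_comb_bounds; auto.
  - rewrite rsum_plus, rsum_scal, rsum_minus, Hsx, Hsp. ring.
  - intros i Hi. apply convex_comb_bounds; auto.
Qed.

Lemma KL_nonneg d p v :
  (forall i, (i < d)%nat -> 0 < p i) -> (forall i, (i < d)%nat -> 0 < v i) ->
  rsum d p = rsum d v -> 0 <= KL d p v.
Proof.
  intros Hp Hv Hs. unfold KL.
  apply Rle_trans with (rsum d (fun i => p i - v i)); [rewrite rsum_minus; lra|].
  apply rsum_le; intros i Hi. pose proof (Hp i Hi). pose proof (Hv i Hi).
  pose proof (ln_le_sub1 (v i / p i) ltac:(apply Rdiv_lt_0_compat; lra)).
  replace (ln (p i / v i)) with (- ln (v i / p i)) by (rewrite !ln_div by lra; ring).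
  assert (p i * ln (v i / p i) <= p i * (v i / p i - 1)) by (apply Rmult_le_compat_l; lra).
  replace (p i * (v i / p i - 1)) with (v i - p i) in * by (field; lra). lra.
Qed.

Lemma xlnx_expansion y p v : 0 < y -> 0 < p -> 0 < v ->
  y * ln (y / v) <= p * ln (p / v) + (y - p) * ln (p / v) + (y - p) + (y - p) * (y - p) / p.
Proof.
  intros Hy Hp Hv.
  replace (ln (y / v)) with (ln (y / p) + ln (p / v)) by (rewrite !ln_div by lra; ring).
  pose proof (ln_le_sub1 (y / p) ltac:(apply Rdiv_lt_0_compat; lra)).
  assert (y * ln (y / p) <= y * (y / p - 1)) by (apply Rmult_le_compat_l; lra).
  replace (y * (y / p - 1)) with ((y - p) * (y - p) / p + (y - p)) in * by (field; lra).
  lra.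
Qed.

Lemma KL_perturbation d p y v :
  (forall i, (i < d)%nat -> 0 < p i) -> (forall i, (i < d)%nat -> 0 < y i) ->
  (forall i, (i < d)%nat -> 0 < v i) ->
  KL d y v <= KL d p v + rsum d (fun i => (y i - p i) * ln (p i / v i))
              + rsum d (fun i => y i - p i)
              + rsum d (fun i => (y i - p i) * (y i - p i) / p i).
Proof.
  intros Hp Hy Hv. unfold KL. rewrite <- !rsum_plus. apply rsum_le; intros i Hi.
  apply xlnx_expansion; auto.
Qed.

Lemma nonneg_of_first_order S C : 0 <= C ->
  (forall eps, 0 < eps <= 1 -> 0 <= eps * S + eps * eps * C) -> 0 <= S.
Proof.
  intros HC H. destruct (Rlt_le_dec S 0) as [HS|HS]; [exfalso|exact HS].
  set (eps := Rmin 1 (- S / (2 * (C + 1)))).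
  assert (Heps : 0 < eps <= 1).
  { split; [apply Rmin_glb_lt; [lra|apply Rdiv_lt_0_compat; lra]|apply Rmin_l]. }
  assert (Hsmall : eps * (C + 1) <= - S / 2).
  { apply Rle_trans with (- S / (2 * (C + 1)) * (C + 1)).
    - apply Rmult_le_compat_r; [lra|apply Rmin_r].
    - right; field; lra. }
  pose proof (H eps Heps). nra.
Qed.

(* Variational inequality of the KL projection p of v onto the convex set
   Δ_d^α: the directional derivative of KL(·, v) at p towards any x is ≥ 0. *)
Lemma KL_projection_variational d alpha v p x : (1 <= d)%nat -> 0 < alpha ->
  (forall i, (i < d)%nat -> 0 < v i) ->
  is_KL_projection d alpha v p -> simplex_alpha d alpha x ->
  0 <= rsum d (fun i => (x i - p i) * ln (p i / v i)).
Proof.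
  intros Hd Ha Hv [Hp Hmin] Hx.
  pose proof (simplex_alpha_pos d alpha p Hd Ha Hp) as Hppos.
  assert (Hsp : rsum d p = 1) by apply Hp.
  assert (Hsx : rsum d x = 1) by apply Hx.
  apply (nonneg_of_first_order _ (rsum d (fun i => (x i - p i) * (x i - p i) / p i))).
  { apply rsum_nonneg; intros i Hi. pose proof (Hppos i Hi).
    apply Rdiv_le_0_compat; [apply Rle_0_sqr|lra]. }
  intros eps Heps.
  set (y := fun i => p i + eps * (x i - p i)).
  assert (Hy : simplex_alpha d alpha y) by (apply simplex_alpha_convex; auto; lra).
  pose proof (Hmin y Hy) as Hopt.
  pose proof (KL_perturbation d p y v Hppos (simplex_alpha_pos d alpha y Hd Ha Hy) Hv)
    as Hexp.
  assert (E1 : rsum d (fun i => (y i - p i) * ln (p i / v i))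
               = eps * rsum d (fun i => (x i - p i) * ln (p i / v i))).
  { rewrite <- rsum_scal. apply rsum_ext; intros; unfold y; ring. }
  assert (E2 : rsum d (fun i => y i - p i) = 0).
  { rewrite (rsum_ext _ _ (fun i => eps * (x i - p i))) by (intros; unfold y; ring).
    rewrite rsum_scal, rsum_minus, Hsx, Hsp. ring. }
  assert (E3 : rsum d (fun i => (y i - p i) * (y i - p i) / p i)
               = eps * eps * rsum d (fun i => (x i - p i) * (x i - p i) / p i)).
  { rewrite <- rsum_scal. apply rsum_ext; intros i Hi. pose proof (Hppos i Hi).
    unfold y. field. lra. }
  lra.
Qed.

(* Consequence: Σ_i x_i ln (p_i / v_i) ≥ 0 for every x ∈ Δ_d^α, since this is the
   variational quantity plus KL(p, v) ≥ 0. *)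
Lemma KL_projection_cross d alpha v p x : (1 <= d)%nat -> 0 < alpha ->
  (forall i, (i < d)%nat -> 0 < v i) -> rsum d v = 1 ->
  is_KL_projection d alpha v p -> simplex_alpha d alpha x ->
  0 <= rsum d (fun i => x i * ln (p i / v i)).
Proof.
  intros Hd Ha Hv Hsv Hproj Hx.
  pose proof (KL_projection_variational d alpha v p x Hd Ha Hv Hproj Hx) as Hvar.
  destruct Hproj as [Hp _].
  assert (Hsp : rsum d p = 1) by apply Hp.
  pose proof (KL_nonneg d p v (simplex_alpha_pos d alpha p Hd Ha Hp) Hv ltac:(lra)).
  replace (rsum d (fun i => x i * ln (p i / v i)))
    with (rsum d (fun i => (x i - p i) * ln (p i / v i)) + KL d p v); [lra|].
  unfold KL. rewrite <- rsum_plus. apply rsum_ext; intros; ring.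
Qed.

Definition cross_entropy d (w x : nat -> R) : R := rsum d (fun i => w i * - ln (x i)).

(* w = (1 - α) u + α ‖u‖₁ / d · (1,…,1): the comparator u mixed with the uniform
   vector of the same mass; its normalization lies in Δ_d^α. *)
Definition mixed_comparator d alpha (u : nat -> R) : nat -> R :=
  fun i => (1 - alpha) * u i + alpha * norm1 d u / INR d.

Lemma norm1_nonneg d u : 0 <= norm1 d u.
Proof. apply rsum_nonneg; intros; apply Rabs_pos. Qed.

Lemma norm1_of_nonneg d u : (forall i, (i < d)%nat -> 0 <= u i) -> norm1 d u = rsum d u.
Proof. intros H. apply rsum_ext; intros. apply Rabs_pos_eq; auto. Qed.

Lemma mixed_comparator_mass d alpha u : (1 <= d)%nat ->
  (forall i, (i < d)%nat -> 0 <= u i) -> rsum d (mixed_comparator d alpha u) = norm1 d u.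
Proof.
  intros Hd Hu. assert (0 < INR d) by (apply lt_0_INR; lia).
  unfold mixed_comparator.
  rewrite rsum_plus, rsum_scal, rsum_const, <- norm1_of_nonneg by auto. field. lra.
Qed.

Lemma mixed_comparator_nonneg d alpha u : (1 <= d)%nat -> 0 <= alpha <= 1 ->
  (forall i, (i < d)%nat -> 0 <= u i) ->
  forall i, (i < d)%nat -> 0 <= mixed_comparator d alpha u i.
Proof.
  intros Hd Ha Hu i Hi. pose proof (Hu i Hi). pose proof (norm1_nonneg d u).
  assert (0 < INR d) by (apply lt_0_INR; lia).
  assert (0 <= alpha * norm1 d u / INR d) by (apply Rdiv_le_0_compat; nra).
  unfold mixed_comparator. nra.
Qed.

Lemma mixed_comparator_direction d alpha u : (1 <= d)%nat -> 0 < alpha < 1 ->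
  (forall i, (i < d)%nat -> 0 <= u i) -> 0 < norm1 d u ->
  simplex_alpha d alpha (fun i => mixed_comparator d alpha u i / norm1 d u).
Proof.
  intros Hd Ha Hu HN. set (N := norm1 d u) in *.
  assert (HdR : 1 <= INR d) by (apply (le_INR 1); lia).
  assert (Had : 0 < alpha / INR d <= alpha).
  { split; [apply Rdiv_lt_0_compat; lra|].
    apply (Rmult_le_reg_r (INR d)); [lra|]. field_simplify; nra. }
  assert (Hb : forall i, (i < d)%nat -> alpha / INR d <= mixed_comparator d alpha u i / N <= 1).
  { intros i Hi.
    assert (Hui : 0 <= u i / N <= 1).
    { split; [apply Rdiv_le_0_compat; [apply Hu; auto|lra]|].
      apply (Rmult_le_reg_r N); [lra|]. field_simplify; [|lra].
      unfold N. rewrite norm1_of_nonneg by auto. apply rsum_le_elem; auto. }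
    replace (mixed_comparator d alpha u i / N) with ((1 - alpha) * (u i / N) + alpha / INR d)
      by (unfold mixed_comparator; fold N; field; lra).
    split; nra. }
  split; [split|]; auto.
  - intros i Hi. pose proof (Hb i Hi). lra.
  - rewrite (rsum_ext _ _ (fun i => / N * mixed_comparator d alpha u i))
      by (intros; unfold Rdiv; ring).
    rewrite rsum_scal, mixed_comparator_mass by auto. fold N. field. lra.
Qed.

Lemma mixed_comparator_loss d alpha u l : (1 <= d)%nat -> 0 <= alpha <= 1 ->
  (forall i, (i < d)%nat -> 0 <= u i) -> (forall i, (i < d)%nat -> 0 <= l i <= 1) ->
  rsum d (fun i => mixed_comparator d alpha u i * l i) <= dot d u l + alpha * norm1 d u.
Proof.
  intros Hd Ha Hu Hl. set (N := norm1 d u) in *.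
  assert (HdR : 0 < INR d) by (apply lt_0_INR; lia).
  assert (HN : 0 <= N) by apply norm1_nonneg.
  replace (rsum d (fun i => mixed_comparator d alpha u i * l i))
    with ((1 - alpha) * dot d u l + alpha * N / INR d * rsum d l)
    by (unfold mixed_comparator, dot; fold N; rewrite <- !rsum_scal, <- rsum_plus;
        apply rsum_ext; intros; ring).
  assert (Hul : 0 <= dot d u l).
  { apply rsum_nonneg; intros i Hi. pose proof (Hu i Hi). pose proof (Hl i Hi). nra. }
  assert (Hsl : rsum d l <= INR d * 1)
    by (rewrite <- rsum_const; apply rsum_le; intros i Hi; apply Hl; auto).
  assert (alpha * N / INR d * rsum d l <= alpha * N / INR d * (INR d * 1)).
  { apply Rmult_le_compat_l; auto. apply Rdiv_le_0_compat; nra. }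
  replace (alpha * N / INR d * (INR d * 1)) with (alpha * N) in * by (field; lra).
  nra.
Qed.

Lemma DTV_max d a b : DTV d a b = rsum d (fun i => Rmax 0 (a i - b i)).
Proof.
  unfold DTV. apply rsum_ext; intros i Hi.
  destruct (Rle_dec (b i) (a i)); [rewrite Rmax_right|rewrite Rmax_left]; lra.
Qed.

Lemma DTV_mixed_comparator d alpha u' u : (1 <= d)%nat -> 0 <= alpha <= 1 ->
  (forall i, (i < d)%nat -> 0 <= u' i) -> (forall i, (i < d)%nat -> 0 <= u i) ->
  DTV d (mixed_comparator d alpha u') (mixed_comparator d alpha u) <= DTV d u' u.
Proof.
  intros Hd Ha Hu' Hu. set (N' := norm1 d u') in *. set (N := norm1 d u) in *.
  assert (HdR : 0 < INR d) by (apply lt_0_INR; lia).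
  assert (HD0 : 0 <= DTV d u' u)
    by (rewrite DTV_max; apply rsum_nonneg; intros; apply Rmax_l).
  (* the mass can only grow by the positive part of u' - u *)
  assert (Hmass : Rmax 0 (N' - N) <= DTV d u' u).
  { apply Rmax_lub; auto. unfold N', N. rewrite !norm1_of_nonneg by auto.
    rewrite <- rsum_minus, DTV_max. apply rsum_le; intros; apply Rmax_r. }
  rewrite DTV_max.
  apply Rle_trans with
    (rsum d (fun i => (1 - alpha) * Rmax 0 (u' i - u i) + alpha / INR d * Rmax 0 (N' - N))).
  - apply rsum_le; intros i Hi.
    assert (0 <= alpha / INR d) by (apply Rdiv_le_0_compat; lra).
    pose proof (Rmax_l 0 (u' i - u i)). pose proof (Rmax_r 0 (u' i - u i)).
    pose proof (Rmax_l 0 (N' - N)). pose proof (Rmax_r 0 (N' - N)).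
    apply Rmax_lub; [nra|]. unfold mixed_comparator. fold N N'.
    replace ((1 - alpha) * u' i + alpha * N' / INR d - ((1 - alpha) * u i + alpha * N / INR d))
      with ((1 - alpha) * (u' i - u i) + alpha / INR d * (N' - N)) by (field; lra).
    nra.
  - rewrite rsum_plus, rsum_scal, rsum_const, <- DTV_max.
    replace (INR d * (alpha / INR d * Rmax 0 (N' - N))) with (alpha * Rmax 0 (N' - N))
      by (field; lra).
    nra.
Qed.

Lemma cross_entropy_nonneg d w x :
  (forall i, (i < d)%nat -> 0 <= w i) -> (forall i, (i < d)%nat -> 0 < x i <= 1) ->
  0 <= cross_entropy d w x.
Proof.
  intros Hw Hx. apply rsum_nonneg; intros i Hi. destruct (Hx i Hi).
  assert (ln (x i) <= ln 1) by (apply ln_le; lra). rewrite ln_1 in *.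
  apply Rmult_le_pos; [apply Hw; auto|lra].
Qed.

Lemma cross_entropy_uniform d w x : (1 <= d)%nat ->
  (forall i, (i < d)%nat -> x i = 1 / INR d) -> cross_entropy d w x = rsum d w * ln (INR d).
Proof.
  intros Hd Hx. assert (0 < INR d) by (apply lt_0_INR; lia).
  unfold cross_entropy. rewrite (rsum_ext _ _ (fun i => ln (INR d) * w i)).
  - rewrite rsum_scal. ring.
  - intros i Hi. rewrite Hx, ln_div, ln_1 by (auto; lra). ring.
Qed.

Lemma neg_ln_simplex_alpha d alpha x : (1 <= d)%nat -> 0 < alpha ->
  simplex_alpha d alpha x -> forall i, (i < d)%nat -> 0 <= - ln (x i) <= ln (INR d / alpha).
Proof.
  intros Hd Ha Hx i Hi.
  assert (HdR : 0 < INR d) by (apply lt_0_INR; lia).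
  destruct Hx as [_ Hb]. destruct (Hb i Hi).
  assert (0 < alpha / INR d) by (apply Rdiv_lt_0_compat; lra).
  split.
  - assert (ln (x i) <= ln 1) by (apply ln_le; lra). rewrite ln_1 in *. lra.
  - assert (ln (alpha / INR d) <= ln (x i)) by (apply ln_le; lra).
    rewrite ln_div in * by lra. lra.
Qed.

Lemma cross_entropy_shift d w' w x L :
  (forall i, (i < d)%nat -> 0 <= - ln (x i) <= L) ->
  cross_entropy d w' x - cross_entropy d w x <= L * DTV d w' w.
Proof.
  intros Hx. unfold cross_entropy. rewrite <- rsum_minus, DTV_max, <- rsum_scal.
  apply rsum_le; intros i Hi. destruct (Hx i Hi).
  pose proof (Rmax_l 0 (w' i - w i)). pose proof (Rmax_r 0 (w' i - w i)).
  replace (w' i * - ln (x i) - w i * - ln (x i)) with ((w' i - w i) * - ln (x i)) by ring.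
  apply Rle_trans with (Rmax 0 (w' i - w i) * - ln (x i)); [apply Rmult_le_compat_r; lra|].
  rewrite Rmult_comm. apply Rmult_le_compat_r; lra.
Qed.

Lemma cross_entropy_update d eta p l w :
  (forall i, (i < d)%nat -> 0 < p i) -> 0 < rsum d (fun i => p i * exp (- eta * l i)) ->
  cross_entropy d w p - cross_entropy d w (preweight d eta p l)
  = - eta * rsum d (fun i => w i * l i)
    - ln (rsum d (fun i => p i * exp (- eta * l i))) * rsum d w.
Proof.
  intros Hp HZ. set (Z := rsum d (fun i => p i * exp (- eta * l i))) in *.
  transitivity (rsum d (fun i => - eta * (w i * l i) + - ln Z * w i)).
  - unfold cross_entropy. rewrite <- rsum_minus. apply rsum_ext; intros i Hi.
    unfold preweight. fold Z. pose proof (Hp i Hi). pose proof (exp_pos (- eta * l i)).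
    rewrite ln_div, ln_mult, ln_exp by (try apply Rmult_lt_0_compat; auto). ring.
  - rewrite rsum_plus, !rsum_scal. ring.
Qed.

Lemma exponential_weights_round d alpha eta p l u : (1 <= d)%nat -> 0 <= alpha <= 1 ->
  0 < eta -> (forall i, (i < d)%nat -> 0 < p i) -> rsum d p = 1 ->
  (forall i, (i < d)%nat -> 0 <= l i <= 1) -> (forall i, (i < d)%nat -> 0 <= u i) ->
  norm1 d u * dot d p l - dot d u l
  <= (cross_entropy d (mixed_comparator d alpha u) p
      - cross_entropy d (mixed_comparator d alpha u) (preweight d eta p l)) / eta
     + (eta / 8 + alpha) * norm1 d u.
Proof.
  intros Hd Ha He Hp Hs Hl Hu.
  destruct (log_partition_bound d eta p l ltac:(lra) ltac:(intros; left; auto) Hs Hl)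
    as [HZ HlnZ].
  rewrite (cross_entropy_update d eta p l _ Hp HZ), mixed_comparator_mass by auto.
  pose proof (mixed_comparator_loss d alpha u l Hd Ha Hu Hl) as Hloss.
  set (W := rsum d (fun i => mixed_comparator d alpha u i * l i)) in *.
  set (lnZ := ln (rsum d (fun i => p i * exp (- eta * l i)))) in *.
  set (N := norm1 d u) in *.
  assert (HN : 0 <= N) by apply norm1_nonneg.
  assert (lnZ * N <= (- eta * dot d p l + eta * eta / 8) * N)
    by (apply Rmult_le_compat_r; auto).
  assert (eta * W <= eta * (dot d u l + alpha * N)) by (apply Rmult_le_compat_l; lra).
  apply (Rmult_le_reg_l eta); [lra|].
  replace (eta * ((- eta * W - lnZ * N) / eta + (eta / 8 + alpha) * N))
    with (- eta * W - lnZ * N + eta * ((eta / 8 + alpha) * N)) by (field; lra).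
  lra.
Qed.

(* The projection onto Δ_d^α does not increase the cross entropy of a mixed
   comparator (by the variational inequality applied to w / ‖u‖₁). *)
Lemma projection_decreases_cross_entropy d alpha u v p : (1 <= d)%nat -> 0 < alpha < 1 ->
  (forall i, (i < d)%nat -> 0 <= u i) ->
  (forall i, (i < d)%nat -> 0 < v i) -> rsum d v = 1 -> is_KL_projection d alpha v p ->
  cross_entropy d (mixed_comparator d alpha u) p
  <= cross_entropy d (mixed_comparator d alpha u) v.
Proof.
  intros Hd Ha Hu Hv Hsv Hproj.
  pose proof (simplex_alpha_pos d alpha p Hd ltac:(lra) (proj1 Hproj)) as Hp.
  set (w := mixed_comparator d alpha u). set (N := norm1 d u).
  replace (cross_entropy d w v) with (cross_entropy d w p + rsum d (fun i => w i * ln (p i / v i)))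
    by (unfold cross_entropy; rewrite <- rsum_plus; apply rsum_ext; intros i Hi;
        rewrite ln_div by auto; ring).
  assert (0 <= rsum d (fun i => w i * ln (p i / v i))); [|lra].
  destruct (Rle_lt_or_eq_dec _ _ (norm1_nonneg d u)) as [HN|HN]; fold N in HN.
  - rewrite (rsum_ext _ _ (fun i => N * (w i / N * ln (p i / v i)))) by (intros; field; lra).
    rewrite rsum_scal. apply Rmult_le_pos; [lra|].
    apply (KL_projection_cross d alpha v p); auto; [lra|].
    apply mixed_comparator_direction; auto.
  - (* ‖u‖₁ = 0 forces u = 0, hence w = 0 *)
    apply rsum_nonneg; intros i Hi.
    assert (Hui : u i = 0).
    { pose proof (Hu i Hi). pose proof (rsum_le_elem d u i Hu Hi) as Hle.
      rewrite <- norm1_of_nonneg in Hle by auto. fold N in Hle. lra. }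
    replace (w i) with 0; [lra|].
    unfold w, mixed_comparator. fold N. rewrite Hui, <- HN. field.
    apply not_0_INR. lia.
Qed.

Lemma comparator_switch_cost d alpha u' u v p : (1 <= d)%nat -> 0 < alpha < 1 ->
  (forall i, (i < d)%nat -> 0 <= u' i) -> (forall i, (i < d)%nat -> 0 <= u i) ->
  (forall i, (i < d)%nat -> 0 < v i) -> rsum d v = 1 -> is_KL_projection d alpha v p ->
  cross_entropy d (mixed_comparator d alpha u') p
  - cross_entropy d (mixed_comparator d alpha u) v <= ln (INR d / alpha) * DTV d u' u.
Proof.
  intros Hd Ha Hu' Hu Hv Hsv Hproj.
  pose proof (neg_ln_simplex_alpha d alpha p Hd ltac:(lra) (proj1 Hproj)) as Hweights.
  pose proof (projection_decreases_cross_entropy d alpha u v p Hd Ha Hu Hv Hsv Hproj)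
    as Hprojection.
  pose proof (cross_entropy_shift d (mixed_comparator d alpha u') (mixed_comparator d alpha u)
    p _ Hweights) as Hshift.
  pose proof (DTV_mixed_comparator d alpha u' u Hd ltac:(lra) Hu' Hu) as Hdtv.
  assert (HL : 0 <= ln (INR d / alpha)) by (destruct (Hweights 0%nat ltac:(lia)); lra).
  apply (Rmult_le_compat_l _ _ _ HL) in Hdtv. lra.
Qed.

Lemma telescoped_sum_bound n eta (r a b c s : nat -> R) : 0 < eta ->
  (forall k, (k < S n)%nat -> r (S k) <= (a (S k) - b (S k)) / eta + c (S k)) ->
  (forall k, (k < n)%nat -> a (k + 2)%nat - b (k + 1)%nat <= s k) ->
  0 <= b (S n) ->
  rsum (S n) (fun k => r (S k)) <= (a 1%nat + rsum n s) / eta + rsum (S n) (fun k => c (S k)).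
Proof.
  intros He Hround Hlink Hlast.
  assert (Hsteps : rsum (S n) (fun k => r (S k))
    <= / eta * rsum (S n) (fun k => a (S k) - b (S k)) + rsum (S n) (fun k => c (S k))).
  { rewrite <- rsum_scal, <- rsum_plus. apply rsum_le; intros k Hk.
    pose proof (Hround k Hk). unfold Rdiv in *. lra. }
  assert (Hlinks : rsum n (fun k => a (S (S k)) - b (S k)) <= rsum n s).
  { apply rsum_le; intros k Hk. pose proof (Hlink k Hk).
    replace (k + 2)%nat with (S (S k)) in * by lia.
    replace (k + 1)%nat with (S k) in * by lia. lra. }
  rewrite rsum_telescope in Hsteps.
  apply (Rmult_le_compat_l (/ eta)) in Hlinks; [|left; apply Rinv_0_lt_compat; lra].
  pose proof (Rinv_0_lt_compat eta He). unfold Rdiv. nra.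
Qed.

Lemma uniform_in_simplex_alpha d alpha x : (1 <= d)%nat -> alpha <= 1 ->
  (forall i, (i < d)%nat -> x i = 1 / INR d) -> simplex_alpha d alpha x.
Proof.
  intros Hd Ha Hx. assert (HdR : 1 <= INR d) by (apply (le_INR 1); lia).
  assert (Hu : alpha / INR d <= 1 / INR d <= 1).
  { split.
    - unfold Rdiv. apply Rmult_le_compat_r; [left; apply Rinv_0_lt_compat|]; lra.
    - apply (Rmult_le_reg_r (INR d)); [lra|]. field_simplify; lra. }
  assert (0 < 1 / INR d) by (apply Rdiv_lt_0_compat; lra).
  split; [split|].
  - intros i Hi. rewrite Hx by auto. lra.
  - rewrite (rsum_ext _ _ (fun _ => 1 / INR d)) by auto. rewrite rsum_const. field. lra.
  - intros i Hi. rewrite Hx by auto. lra.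
Qed.

Section ShareRun.

(* A run of the algorithm over T = n + 1 rounds, with the hypotheses of the theorem. *)
Variables (d n : nat) (alpha eta : R) (p l u : nat -> nat -> R).
Hypothesis Hd : (1 <= d)%nat.
Hypothesis Ha : 0 < alpha < 1.
Hypothesis He : 0 < eta.
Hypothesis Hl : forall t i, (1 <= t <= S n)%nat -> (i < d)%nat -> 0 <= l t i <= 1.
Hypothesis Hu : forall t i, (1 <= t <= S n)%nat -> (i < d)%nat -> 0 <= u t i.
Hypothesis Hp1 : forall i, (i < d)%nat -> p 1%nat i = 1 / INR d.
Hypothesis Hproj : forall t, (1 <= t < S n)%nat ->
  is_KL_projection d alpha (preweight d eta (p t) (l t)) (p (S t)).

Lemma iterates_in_simplex_alpha t : (1 <= t <= S n)%nat -> simplex_alpha d alpha (p t).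
Proof.
  destruct t as [|[|t]]; intros Ht; [lia|apply uniform_in_simplex_alpha; auto; lra|].
  exact (proj1 (Hproj (S t) ltac:(lia))).
Qed.

Lemma iterates_pos t : (1 <= t <= S n)%nat -> forall i, (i < d)%nat -> 0 < p t i.
Proof. intros Ht. apply (simplex_alpha_pos d alpha); [auto|lra|apply iterates_in_simplex_alpha, Ht]. Qed.

Lemma iterates_mass t : (1 <= t <= S n)%nat -> rsum d (p t) = 1.
Proof. intros Ht. apply (iterates_in_simplex_alpha t Ht). Qed.

Lemma run_preweights t : (1 <= t <= S n)%nat ->
  (forall i, (i < d)%nat -> 0 < preweight d eta (p t) (l t) i <= 1) /\
  rsum d (preweight d eta (p t) (l t)) = 1.
Proof.
  intros Ht. apply preweight_distribution;
    [lra|apply iterates_pos, Ht|apply iterates_mass, Ht|intros; apply Hl; auto].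
Qed.

Lemma run_round k : (k < S n)%nat ->
  norm1 d (u (S k)) * dot d (p (S k)) (l (S k)) - dot d (u (S k)) (l (S k))
  <= (cross_entropy d (mixed_comparator d alpha (u (S k))) (p (S k))
      - cross_entropy d (mixed_comparator d alpha (u (S k)))
          (preweight d eta (p (S k)) (l (S k)))) / eta
     + (eta / 8 + alpha) * norm1 d (u (S k)).
Proof.
  intros Hk. apply exponential_weights_round;
    [exact Hd|lra|exact He|apply iterates_pos; lia|apply iterates_mass; lia|
     intros; apply Hl; auto; lia|intros; apply Hu; auto; lia].
Qed.

Lemma run_switch k : (k < n)%nat ->
  cross_entropy d (mixed_comparator d alpha (u (k + 2)%nat)) (p (k + 2)%nat)
  - cross_entropy d (mixed_comparator d alpha (u (k + 1)%nat))
      (preweight d eta (p (k + 1)%nat) (l (k + 1)%nat))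
  <= ln (INR d / alpha) * DTV d (u (k + 2)%nat) (u (k + 1)%nat).
Proof.
  intros Hk. replace (k + 2)%nat with (S (k + 1)) by lia.
  apply comparator_switch_cost;
    [exact Hd|exact Ha|intros; apply Hu; auto; lia|intros; apply Hu; auto; lia|
     apply run_preweights; lia|apply run_preweights; lia|apply Hproj; lia].
Qed.

Lemma run_last :
  0 <= cross_entropy d (mixed_comparator d alpha (u (S n))) (preweight d eta (p (S n)) (l (S n))).
Proof.
  apply cross_entropy_nonneg.
  - apply mixed_comparator_nonneg; [exact Hd|lra|intros; apply Hu; auto; lia].
  - apply run_preweights; lia.
Qed.

Lemma run_first :
  cross_entropy d (mixed_comparator d alpha (u 1%nat)) (p 1%nat) = norm1 d (u 1%nat) * ln (INR d).
Proof.
  rewrite cross_entropy_uniform, mixed_comparator_mass; auto. intros; apply Hu; auto; lia.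
Qed.

Lemma share_run_bound :
  rsum (S n) (fun k => norm1 d (u (S k)) * dot d (p (S k)) (l (S k)) - dot d (u (S k)) (l (S k)))
  <= (norm1 d (u 1%nat) * ln (INR d)
      + rsum n (fun k => ln (INR d / alpha) * DTV d (u (k + 2)%nat) (u (k + 1)%nat))) / eta
     + rsum (S n) (fun k => (eta / 8 + alpha) * norm1 d (u (S k))).
Proof.
  rewrite <- run_first.
  apply (telescoped_sum_bound n eta
    (fun t => norm1 d (u t) * dot d (p t) (l t) - dot d (u t) (l t))
    (fun t => cross_entropy d (mixed_comparator d alpha (u t)) (p t))
    (fun t => cross_entropy d (mixed_comparator d alpha (u t)) (preweight d eta (p t) (l t)))
    (fun t => (eta / 8 + alpha) * norm1 d (u t)));
    [exact He|exact run_round|exact run_switch|exact run_last].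
Qed.

End ShareRun.

Theorem theorem1 (d : nat) (alpha eta : R) (T : nat)
  (p l u : nat -> nat -> R) :
  (1 <= d)%nat -> 0 < alpha < 1 -> 0 < eta -> (1 <= T)%nat ->
  (forall t i, (1 <= t <= T)%nat -> (i < d)%nat -> 0 <= l t i <= 1) ->
  (forall t i, (1 <= t <= T)%nat -> (i < d)%nat -> 0 <= u t i) ->
  (forall i, (i < d)%nat -> p 1%nat i = 1 / INR d) ->
  (forall t, (1 <= t < T)%nat ->
     is_KL_projection d alpha (preweight d eta (p t) (l t)) (p (S t))) ->
  sumT T (fun t => norm1 d (u t) * dot d (p t) (l t))
    - sumT T (fun t => dot d (u t) (l t))
  <= norm1 d (u 1%nat) * ln (INR d) / eta
     + shifts d T u / eta * ln (INR d / alpha)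
     + (eta / 8 + alpha) * sumT T (fun t => norm1 d (u t)).
Proof.
  intros Hd Ha He HT Hl Hu Hp1 Hproj.
  destruct T as [|n]; [lia|].
  pose proof (share_run_bound d n alpha eta p l u Hd Ha He Hl Hu Hp1 Hproj) as Hbound.
  rewrite rsum_minus, !rsum_scal in Hbound.
  unfold sumT, shifts. replace (S n - 1)%nat with n by lia.
  unfold Rdiv in *. lra.
Qed.
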